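(* Let $p,q\geq0$ be integers with $(p,q)\notin\{(1,0),(0,1),(1,1)\}$. Then $\beta_{p,q}(D)\neq0$ for every real $D>4$, where $$\beta_{p,q}(D)=\frac{(-1)^q2^p}{D^q[(D-1)(D-2)]^p}\Big[(-1)^{p+q}2^{p+q-1}(D-2)(D-3)+2^{1-q}(D-2)(D-3)^p(D-4)^q+(-1)^p(D-2)^{p+q}(D-3)^p\Big].$$ *)

From Stdlib Require Import Reals ZArith.
Open Scope R_scope.

(* beta_{p,q}(D) as in the paper; integer exponents of 2 (which may be
   negative, e.g. 2^{p+q-1} for p=q=0, 2^{1-q} for q>=2) use powerRZ. *)
Definition beta (p q : nat) (D : R) : R :=
  ((-1) ^ q * 2 ^ p) / (D ^ q * ((D - 1) * (D - 2)) ^ p) *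
  ( (-1) ^ (p + q) * powerRZ 2 (Z.of_nat p + Z.of_nat q - 1) * (D - 2) * (D - 3)
  + powerRZ 2 (1 - Z.of_nat q) * (D - 2) * (D - 3) ^ p * (D - 4) ^ q
  + (-1) ^ p * (D - 2) ^ (p + q) * (D - 3) ^ p ).

(** The prefactor of beta_{p,q}(D) is nonzero, and its bracket has the sign
    of (-1)^p.  For p = q = 0 the bracket is visibly positive.  Otherwise put
    z := D - 4 > 0 and p + q = n + 1; the bracket equals (z + 2) times
      (-1)^(p+q) 2^n (z+1) + 2^(1-q) (z+1)^p z^q + (-1)^p (z+2)^n (z+1)^p,
    and in each of the four parity cases the last term dominates whichever of
    the two other terms carries the opposite sign.  The excluded pairs are
    exactly those for which n is too small for this domination. *)

From Stdlib Require Import Reals ZArith Lra Lia.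
Open Scope R_scope.

Lemma pow_add_le (a b : R) (n : nat) :
  0 <= a -> 0 <= b -> (1 <= n)%nat -> a ^ n + b ^ n <= (a + b) ^ n.
Proof.
  intros Ha Hb Hn. induction n as [|n IH]; [lia|].
  destruct (Nat.eq_dec n 0) as [->|Hn0]; [simpl; lra|].
  specialize (IH ltac:(lia)).
  assert (0 <= a ^ n) by (apply pow_le; lra).
  assert (0 <= b ^ n) by (apply pow_le; lra).
  simpl. nra.
Qed.

Lemma pow_add_lt (a b : R) (n : nat) :
  0 < a -> 0 < b -> (2 <= n)%nat -> a ^ n + b ^ n < (a + b) ^ n.
Proof.
  intros Ha Hb Hn. destruct n as [|n]; [lia|].
  pose proof (pow_add_le a b n ltac:(lra) ltac:(lra) ltac:(lia)).
  assert (0 < a ^ n) by (apply pow_lt; lra).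
  assert (0 < b ^ n) by (apply pow_lt; lra).
  simpl. nra.
Qed.

Lemma two_pow_add_pow_lt (z : R) (q n : nat) :
  0 < z -> (1 <= q <= n)%nat -> (2 <= n)%nat -> 2 ^ n + z ^ q < (z + 2) ^ n.
Proof.
  intros Hz Hqn Hn.
  destruct (Nat.eq_dec q n) as [->|Hq].
  { pose proof (pow_add_lt z 2 n Hz ltac:(lra) Hn). lra. }
  replace n with (n - q + q)%nat by lia. rewrite !pow_add.
  assert (H2 : 2 <= 2 ^ (n - q)).
  { rewrite <- (pow_1 2) at 1. apply Rle_pow; [lra | lia]. }
  assert (2 ^ (n - q) <= (z + 2) ^ (n - q)) by (apply pow_incr; lra).
  assert (z ^ q + 2 ^ q <= (z + 2) ^ q) by (apply pow_add_le; lra || lia).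
  assert (0 < z ^ q) by (apply pow_lt; lra).
  assert (0 < 2 ^ q) by (apply pow_lt; lra).
  nra.
Qed.

(** [(z + 2)^2 - 4 (z + 1) = z^2]. *)
Lemma two_pow_mul_le_pow (z : R) (n : nat) :
  0 <= z -> (2 <= n)%nat -> 2 ^ n * (z + 1) <= (z + 2) ^ n.
Proof.
  intros Hz Hn. replace n with (n - 2 + 2)%nat by lia. rewrite !pow_add.
  assert (2 ^ (n - 2) <= (z + 2) ^ (n - 2)) by (apply pow_incr; lra).
  assert (0 < 2 ^ (n - 2)) by (apply pow_lt; lra).
  simpl. nra.
Qed.

Lemma two_div_two_pow_le_1 (q : nat) : (1 <= q)%nat -> 2 / 2 ^ q <= 1.
Proof.
  intros Hq.
  assert (2 <= 2 ^ q) by (rewrite <- (pow_1 2) at 1; apply Rle_pow; lra || lia).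
  apply Rmult_le_reg_r with (2 ^ q); [lra|].
  unfold Rdiv. rewrite Rmult_assoc, Rinv_l by lra. lra.
Qed.

Lemma neg1_pow_parity (n : nat) :
  (Nat.Even n /\ (-1) ^ n = 1) \/ (Nat.Odd n /\ (-1) ^ n = -1).
Proof.
  destruct (Nat.Even_or_Odd n) as [[k ->]|[k ->]].
  - left. split; [now exists k | apply pow_1_even].
  - right. split; [now exists k |]. rewrite Nat.add_1_r. apply pow_1_odd.
Qed.

Lemma two_pow_mul_le_pow_mul (z : R) (n p : nat) :
  0 <= z -> (1 <= p \/ 2 <= n)%nat -> 2 ^ n * (z + 1) <= (z + 2) ^ n * (z + 1) ^ p.
Proof.
  intros Hz [Hp|Hn].
  - assert (2 ^ n <= (z + 2) ^ n) by (apply pow_incr; lra).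
    assert (z + 1 <= (z + 1) ^ p) by (rewrite <- (pow_1 (z + 1)) at 1; apply Rle_pow; lra || lia).
    pose proof (pow_lt 2 n). nra.
  - pose proof (two_pow_mul_le_pow z n Hz Hn).
    assert (1 <= (z + 1) ^ p) by (apply pow_R1_Rle; lra).
    pose proof (pow_lt (z + 2) n). nra.
Qed.

Lemma two_div_two_pow_mul_pow_le (z : R) (q n : nat) :
  0 <= z -> (q <= n)%nat -> (1 <= n)%nat -> 2 / 2 ^ q * z ^ q <= (z + 2) ^ n.
Proof.
  intros Hz Hqn Hn. destruct (Nat.eq_dec q 0) as [->|Hq].
  - assert (z + 2 <= (z + 2) ^ n) by (rewrite <- (pow_1 (z + 2)) at 1; apply Rle_pow; lra || lia).
    simpl. rewrite Rdiv_1_r. lra.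
  - pose proof (two_div_two_pow_le_1 q ltac:(lia)).
    assert (z ^ q <= (z + 2) ^ q) by (apply pow_incr; lra).
    assert ((z + 2) ^ q <= (z + 2) ^ n) by (apply Rle_pow; lra || lia).
    assert (0 <= z ^ q) by (apply pow_le; lra).
    nra.
Qed.

Lemma two_pow_mul_add_lt_pow_mul (z : R) (p q n : nat) :
  0 < z -> (1 <= p)%nat -> (1 <= q <= n)%nat -> (2 <= n)%nat ->
  2 ^ n * (z + 1) + 2 / 2 ^ q * (z + 1) ^ p * z ^ q < (z + 2) ^ n * (z + 1) ^ p.
Proof.
  intros Hz Hp Hqn Hn.
  pose proof (two_pow_add_pow_lt z q n Hz Hqn Hn).
  pose proof (two_div_two_pow_le_1 q ltac:(lia)).
  assert (z + 1 <= (z + 1) ^ p) by (rewrite <- (pow_1 (z + 1)) at 1; apply Rle_pow; lra || lia).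
  assert (0 < (z + 1) ^ p) by (apply pow_lt; lra).
  assert (0 < z ^ q) by (apply pow_lt; lra).
  assert (0 < 2 ^ n) by (apply pow_lt; lra).
  assert (2 / 2 ^ q * (z + 1) ^ p * z ^ q <= (z + 1) ^ p * z ^ q).
  { assert (0 < (z + 1) ^ p * z ^ q) by nra. rewrite Rmult_assoc. nra. }
  nra.
Qed.

Lemma reduced_bracket_sign (p q n : nat) (z : R) :
  (p + q)%nat = S n -> 0 < z ->
  ~ (p = 1%nat /\ q = 0%nat) -> ~ (p = 0%nat /\ q = 1%nat) -> ~ (p = 1%nat /\ q = 1%nat) ->
  0 < (-1) ^ p * ((-1) ^ (p + q) * 2 ^ n * (z + 1)
                  + 2 / 2 ^ q * (z + 1) ^ p * z ^ q
                  + (-1) ^ p * (z + 2) ^ n * (z + 1) ^ p).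
Proof.
  intros Hn Hz H10 H01 H11.
  assert (0 < 2 ^ n * (z + 1)) by (pose proof (pow_lt 2 n); nra).
  assert (0 < 2 / 2 ^ q * (z + 1) ^ p * z ^ q).
  { pose proof (pow_lt 2 q). pose proof (pow_lt (z + 1) p). pose proof (pow_lt z q).
    repeat apply Rmult_lt_0_compat; try apply Rinv_0_lt_compat; lra. }
  assert (0 < (z + 2) ^ n * (z + 1) ^ p).
  { pose proof (pow_lt (z + 2) n). pose proof (pow_lt (z + 1) p). nra. }
  rewrite pow_add.
  destruct (neg1_pow_parity p) as [[[k Hp] ->]|[[k Hp] ->]];
  destruct (neg1_pow_parity q) as [[[j Hq] ->]|[[j Hq] ->]].
  - lra.
  - pose proof (two_pow_mul_le_pow_mul z n p ltac:(lra) ltac:(lia)). lra.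
  - pose proof (two_div_two_pow_mul_pow_le z q n ltac:(lra) ltac:(lia) ltac:(lia)).
    assert (0 < (z + 1) ^ p) by (apply pow_lt; lra).
    nra.
  - pose proof (two_pow_mul_add_lt_pow_mul z p q n Hz ltac:(lia) ltac:(lia) ltac:(lia)). lra.
Qed.

Definition beta_bracket (p q : nat) (D : R) : R :=
  (-1) ^ (p + q) * powerRZ 2 (Z.of_nat p + Z.of_nat q - 1) * (D - 2) * (D - 3)
  + powerRZ 2 (1 - Z.of_nat q) * (D - 2) * (D - 3) ^ p * (D - 4) ^ q
  + (-1) ^ p * (D - 2) ^ (p + q) * (D - 3) ^ p.

Lemma beta_factor (p q : nat) (D : R) :
  beta p q D = (-1) ^ q * 2 ^ p / (D ^ q * ((D - 1) * (D - 2)) ^ p) * beta_bracket p q D.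
Proof. reflexivity. Qed.

Lemma powerRZ_two_one_sub (q : nat) : powerRZ 2 (1 - Z.of_nat q) = 2 / 2 ^ q.
Proof.
  assert (H : powerRZ 2 (1 - Z.of_nat q) * 2 ^ q = 2).
  { rewrite pow_powerRZ, <- powerRZ_add by lra.
    replace (1 - Z.of_nat q + Z.of_nat q)%Z with 1%Z by lia. simpl. ring. }
  assert (2 ^ q <> 0) by (apply pow_nonzero; lra).
  apply Rmult_eq_reg_r with (2 ^ q); [|assumption].
  rewrite H. field. assumption.
Qed.

Lemma beta_bracket_sign (p q : nat) (D : R) :
  ~ (p = 1%nat /\ q = 0%nat) -> ~ (p = 0%nat /\ q = 1%nat) -> ~ (p = 1%nat /\ q = 1%nat) ->
  4 < D -> 0 < (-1) ^ p * beta_bracket p q D.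
Proof.
  intros H10 H01 H11 HD.
  destruct (p + q)%nat as [|n] eqn:Hn.
  { assert (p = 0%nat /\ q = 0%nat) as [-> ->] by lia.
    unfold beta_bracket. simpl. nra. }
  replace (beta_bracket p q D) with
    ((D - 2) * ((-1) ^ (p + q) * 2 ^ n * (D - 4 + 1)
                + 2 / 2 ^ q * (D - 4 + 1) ^ p * (D - 4) ^ q
                + (-1) ^ p * (D - 4 + 2) ^ n * (D - 4 + 1) ^ p)).
  2: { unfold beta_bracket.
       rewrite powerRZ_two_one_sub.
       replace (Z.of_nat p + Z.of_nat q - 1)%Z with (Z.of_nat n) by lia.
       rewrite <- pow_powerRZ.
       replace ((D - 2) ^ (p + q)) with ((D - 2) * (D - 2) ^ n) by (rewrite Hn; reflexivity).
       replace (D - 4 + 1) with (D - 3) by ring. replace (D - 4 + 2) with (D - 2) by ring.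
       ring. }
  pose proof (reduced_bracket_sign p q n (D - 4) Hn ltac:(lra) H10 H01 H11).
  nra.
Qed.

Theorem mainTheorem7 (p q : nat) :
  ~ (p = 1%nat /\ q = 0%nat) -> ~ (p = 0%nat /\ q = 1%nat) -> ~ (p = 1%nat /\ q = 1%nat) ->
  forall D : R, D > 4 -> beta p q D <> 0.
Proof.
  intros H10 H01 H11 D HD.
  rewrite beta_factor. apply Rmult_integral_contrapositive_currified.
  - assert ((D - 1) * (D - 2) <> 0) by nra.
    unfold Rdiv. repeat apply Rmult_integral_contrapositive_currified;
      try apply Rinv_neq_0_compat; try apply Rmult_integral_contrapositive_currified;
      apply pow_nonzero; lra.
  - intro H0. pose proof (beta_bracket_sign p q D H10 H01 H11 HD) as Hsign.
    rewrite H0, Rmult_0_r in Hsign. lra.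
Qed.
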